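(* Consider $N$ agents $\mathcal{V}=\{1,\dots,N\}$ interacting over a fixed graph in which agent $i$ has the nonempty neighbor set $\mathcal{N}_i$ of cardinality $n_i$. Let $\beta\in[0,1]$ and let $(q_p(k))_{k\ge0}$ be a sequence with values in $\{-1,1\}$. The opinions evolve by $$\theta_i(k+1)=\theta_i(k)+\bigl(1-\theta_i(k)^2\bigr)\Bigl[\beta\bigl(q_p(k)-\theta_i(k)\bigr)+(1-\beta)\frac{1}{n_i}\sum_{j\in\mathcal{N}_i}\bigl(q_j(k)-\theta_i(k)\bigr)\Bigr],$$ with actions $q_j(k)=1$ if $\theta_j(k)>0$ or ($\theta_j(k)=0$ and $q_j(k-1)=1$), and $q_j(k)=-1$ if $\theta_j(k)<0$ or ($\theta_j(k)=0$ and $q_j(k-1)=-1$). Let $n_i^{\pm}(k)=|\{j\in\mathcal{N}_i:q_j(k)=\pm1\}|$. Let $i\in\mathcal{V}$ with $\theta_i(0)\in(-1,1)$ and assume $\beta<1/(1+n_i)$. Then for every $k$: - if $n_i^+(k)>n_i^-(k)$ and $q_i(k)=1$, then $q_i(k+1)=1$; - if $n_i^-(k)>n_i^+(k)$ and $q_i(k)=-1$, then $q_i(k+1)=-1$.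
   Context: Opinions take values in $[-1,1]$. The neighbor set $\mathcal{N}_i$ consists of the agents $j$ with $(j,i)$ an edge of the graph. *)

From mathcomp Require Import all_boot all_order all_algebra.
Set Implicit Arguments. Unset Strict Implicit. Unset Printing Implicit Defensive.
Import Order.TTheory GRing.Theory Num.Theory.
Local Open Scope ring_scope.

Definition nbrs (N : nat) (E : rel 'I_N) (i : 'I_N) : {set 'I_N} :=
  [set j | E j i].

(* Actions q_j(k).  [q0 j] plays the role of q_j(-1) (in {-1,1}),
   used only when theta_j(0) = 0. *)
Fixpoint action (R : realFieldType) (N : nat) (q0 : 'I_N -> R)
    (theta : nat -> 'I_N -> R) (k : nat) (j : 'I_N) : R :=
  match k with
  | 0 => if 0 < theta 0%N j then 1 else if theta 0%N j < 0 then -1 else q0 j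
  | k'.+1 => if 0 < theta k j then 1 else if theta k j < 0 then -1
             else action q0 theta k' j
  end.

Definition nplus (R : realFieldType) (N : nat) (E : rel 'I_N)
    (q : nat -> 'I_N -> R) (k : nat) (i : 'I_N) : nat :=
  #|[set j in nbrs E i | q k j == 1]|.
Definition nminus (R : realFieldType) (N : nat) (E : rel 'I_N)
    (q : nat -> 'I_N -> R) (k : nat) (i : 'I_N) : nat :=
  #|[set j in nbrs E i | q k j == -1]|.

From mathcomp Require Import all_boot all_order all_algebra.
From mathcomp Require Import ring lra.

Set Implicit Arguments.
Unset Strict Implicit.
Unset Printing Implicit Defensive.
Import Order.TTheory GRing.Theory Num.Theory.
Local Open Scope ring_scope.

(* The update reads theta' = theta^3 + (1 - theta^2) c with the drive
   c = beta q_p + (1 - beta) (n^+ - n^-) / n_i in [-1, 1]; hence [-1, 1] is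
   invariant and theta' has the sign of c whenever theta has it.  If agent i
   acts with sign s and its neighbours favour s by a margin of at least one,
   then s c >= (1 - beta) / n_i - beta > 0 because beta (1 + n_i) < 1, so the
   opinion does not cross zero and the action, which is sticky at zero, keeps
   the sign s. *)

Definition pm_one (R : ringType) (x : R) : Prop := x = 1 \/ x = -1.

Lemma eqrN11 (R : numDomainType) : (-1 == 1 :> R) = false.
Proof. exact/lt_eqF/(lt_trans (ltrN10 R) ltr01). Qed.

Lemma pm_one_norm (R : realDomainType) (x : R) : pm_one x -> `|x| = 1.
Proof. by case=> ->; rewrite ?normrN normr1. Qed.

Section Actions.
Variables (R : realFieldType) (N : nat) (q0 : 'I_N -> R) (theta : nat -> 'I_N -> R).

Lemma action_pm_one :
  (forall j, pm_one (q0 j)) -> forall k j, pm_one (action q0 theta k j).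
Proof.
move=> q0_pm; elim=> [|k IHk] j /=.
  by case: ifP => _; [left | case: ifP => _; [right | exact: q0_pm]].
by case: ifP => _; [left | case: ifP => _; [right | exact: IHk]].
Qed.

Lemma action_sign (s : R) k j :
  pm_one s -> action q0 theta k j = s -> 0 <= s * theta k j.
Proof. by case=> ->; case: k => [|k] /=; case: ltgtP => theta_sign act_s; lra. Qed.

Lemma action_succ (s : R) k j :
  pm_one s -> 0 <= s * theta k.+1 j ->
  action q0 theta k j = s -> action q0 theta k.+1 j = s.
Proof. by case=> -> /=; case: ltgtP => // theta_sign; lra. Qed.

End Actions.

Section SignedSums.
Variables (R : realDomainType) (T : finType) (S : {set T}) (a : T -> R).
Hypothesis a_pm : forall l, pm_one (a l).

Lemma sum_pm_one_card :
  \sum_(l in S) a l =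
    #|[set l in S | a l == 1]|%:R - #|[set l in S | a l == -1]|%:R.
Proof.
have sum_level b :
    \sum_(l in S | a l == b) a l = #|[set l in S | a l == b]|%:R * b.
  rewrite mulr_natl -sumr_const big_set.
  by apply: eq_big => // l /andP[_ /eqP].
have neq1E l : (a l != 1) = (a l == -1).
  by case: (a_pm l) => ->; rewrite ?eqxx ?eqrN11 // eq_sym eqrN11.
rewrite (bigID (fun l => a l == 1)) /= sum_level mulr1.
rewrite (eq_bigl (fun l => (l \in S) && (a l == -1))) => [|l]; last by rewrite neq1E.
by rewrite sum_level mulrN1.
Qed.

Lemma norm_sum_pm_one : `|\sum_(l in S) a l| <= #|S|%:R.
Proof.
rewrite -sumr_const (le_trans (ler_norm_sum _ _ _)) //.
by apply: ler_sum => l _; rewrite pm_one_norm.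
Qed.

End SignedSums.

Section UpdateMap.
Variable R : realFieldType.
Implicit Types beta p n s x c : R.

Definition social_drive beta p n s : R := beta * p + (1 - beta) * n^-1 * s.

Lemma social_drive_range beta p n s :
  0 <= beta <= 1 -> 0 < n -> pm_one p -> `|s| <= n ->
  -1 <= social_drive beta p n s <= 1.
Proof.
move=> /andP[beta_ge0 beta_le1] n_gt0 p_pm s_le.
have /andP[mean_ge mean_le] : -1 <= n^-1 * s <= 1.
  by rewrite -ler_norml normrM normfV (gtr0_norm n_gt0) ler_pdivrMl // mulr1.
by rewrite /social_drive -mulrA; case: p_pm => ->; nra.
Qed.

Lemma social_drive_sign (sg : R) beta p n s :
  pm_one sg -> 0 <= beta -> 0 < n -> beta < (1 + n)^-1 -> pm_one p ->
  1 <= sg * s -> 0 < sg * social_drive beta p n s.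
Proof.
move=> sg_pm beta_ge0 n_gt0 beta_small p_pm favoured.
have beta_n : beta * (1 + n) < 1 by rewrite -ltr_pdivlMr ?div1r //; lra.
have weight : beta < (1 - beta) * n^-1 by rewrite ltr_pdivlMr //; lra.
have sg_p : -1 <= sg * p by case: sg_pm p_pm => -> [] ->; lra.
have -> : sg * social_drive beta p n s =
    beta * (sg * p) + (1 - beta) * n^-1 * (sg * s) by rewrite /social_drive; ring.
have w_ge0 : 0 <= (1 - beta) * n^-1 by apply: le_trans (ltW weight).
have := ler_wpM2l beta_ge0 sg_p; have := ler_wpM2l w_ge0 favoured.
rewrite mulrN1 mulr1; lra.
Qed.

Lemma subr_sqr_ge0 x : -1 <= x <= 1 -> 0 <= 1 - x ^+ 2.
Proof.
move=> /andP[x_ge x_le].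
by rewrite (_ : 1 - x ^+ 2 = (1 - x) * (1 + x)); [apply: mulr_ge0; lra | ring].
Qed.

Lemma cubic_update_range x c :
  -1 <= x <= 1 -> -1 <= c <= 1 -> -1 <= x ^+ 3 + (1 - x ^+ 2) * c <= 1.
Proof.
move=> x_range /andP[c_ge c_le]; have := x_range => /andP[x_ge x_le].
have lower : x ^+ 3 + (1 - x ^+ 2) * c - -1 =
  (1 - x ^+ 2) * (1 + c) + x ^+ 2 * (1 + x) by ring.
have upper : 1 - (x ^+ 3 + (1 - x ^+ 2) * c) =
  (1 - x ^+ 2) * (1 - c) + x ^+ 2 * (1 - x) by ring.
apply/andP; split; rewrite -subr_ge0 ?lower ?upper;
  by apply: addr_ge0; apply: mulr_ge0; rewrite ?subr_sqr_ge0 ?sqr_ge0 //; lra.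
Qed.

Lemma cubic_update_sign sg x c :
  -1 <= x <= 1 -> 0 <= sg * x -> 0 <= sg * c ->
  0 <= sg * (x ^+ 3 + (1 - x ^+ 2) * c).
Proof.
move=> x_range sg_x sg_c.
rewrite (_ : sg * _ = sg * x * x ^+ 2 + (1 - x ^+ 2) * (sg * c)); last by ring.
by apply: addr_ge0; apply: mulr_ge0; rewrite ?sqr_ge0 ?subr_sqr_ge0.
Qed.

End UpdateMap.

Section OpinionDynamics.
Variables (R : realFieldType) (N : nat) (E : rel 'I_N) (beta : R)
  (qp : nat -> R) (q0 : 'I_N -> R) (theta : nat -> 'I_N -> R).
Hypotheses (nbrs_neq0 : forall j, nbrs E j != set0) (beta01 : 0 <= beta <= 1)
  (qp_pm : forall k, pm_one (qp k)) (q0_pm : forall j, pm_one (q0 j)).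
Hypothesis theta_rec : forall k j, theta k.+1 j =
  theta k j + (1 - theta k j ^+ 2) *
    (beta * (qp k - theta k j) +
     (1 - beta) * (#|nbrs E j|%:R)^-1 *
       \sum_(l in nbrs E j) (action q0 theta k l - theta k j)).

Local Notation q := (action q0 theta).
Local Notation deg j := (#|nbrs E j|%:R : R).

Lemma deg_gt0 j : 0 < deg j.
Proof. by rewrite ltr0n card_gt0 nbrs_neq0. Qed.

Lemma theta_succE k j :
  theta k.+1 j = theta k j ^+ 3 + (1 - theta k j ^+ 2) *
    social_drive beta (qp k) (deg j) (\sum_(l in nbrs E j) q k l).
Proof.
have deg_neq0 : deg j != 0 by rewrite gt_eqF ?deg_gt0.
by rewrite theta_rec sumrB sumr_const -mulr_natr /social_drive; field.
Qed.

Lemma theta_range j : -1 <= theta 0 j <= 1 -> forall k, -1 <= theta k j <= 1.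
Proof.
move=> theta0; elim=> [|k IHk] //; rewrite theta_succE.
apply: cubic_update_range => //; apply: social_drive_range => //.
  exact: deg_gt0.
by apply: norm_sum_pm_one => l; apply: action_pm_one.
Qed.

Lemma action_persists (sg : R) k j :
  pm_one sg -> -1 <= theta 0 j <= 1 -> beta < (1 + deg j)^-1 ->
  1 <= sg * \sum_(l in nbrs E j) q k l -> q k j = sg -> q k.+1 j = sg.
Proof.
move=> sg_pm theta0 beta_small favoured act_sg.
apply: action_succ => //; rewrite theta_succE.
apply: cubic_update_sign; first exact: theta_range.
  exact: action_sign sg_pm act_sg.
apply/ltW/social_drive_sign => //; first by case/andP: beta01.
exact: deg_gt0.
Qed.

End OpinionDynamics.

Theorem mainTheorem4 (R : realFieldType) (N : nat) (E : rel 'I_N)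
  (beta : R) (qp : nat -> R) (q0 : 'I_N -> R) (theta : nat -> 'I_N -> R)
  (i : 'I_N) :
  (forall j : 'I_N, nbrs E j != set0) ->
  0 <= beta <= 1 ->
  (forall k, qp k = 1 \/ qp k = -1) ->
  (forall j, q0 j = 1 \/ q0 j = -1) ->
  (forall j, -1 <= theta 0%N j <= 1) ->
  (forall k j, theta k.+1 j =
     theta k j + (1 - theta k j ^+ 2) *
       (beta * (qp k - theta k j) +
        (1 - beta) * (#|nbrs E j|%:R)^-1 *
          \sum_(l in nbrs E j) (action q0 theta k l - theta k j))) ->
  -1 < theta 0%N i < 1 ->
  beta < (1 + #|nbrs E i|%:R)^-1 ->
  forall k : nat,
    ((nminus E (action q0 theta) k i < nplus E (action q0 theta) k i)%N ->
      action q0 theta k i = 1 -> action q0 theta k.+1 i = 1) /\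
    ((nplus E (action q0 theta) k i < nminus E (action q0 theta) k i)%N ->
      action q0 theta k i = -1 -> action q0 theta k.+1 i = -1).
Proof.
(* Only agent i's initial opinion matters: the drive stays in [-1, 1] whatever
   the other opinions are. *)
move=> nbrs_neq0 beta01 qp_pm q0_pm _ theta_rec /andP[theta0_gt theta0_lt]
  beta_small k.
have theta0 : -1 <= theta 0%N i <= 1 by rewrite !ltW.
have persists := action_persists nbrs_neq0 beta01 qp_pm q0_pm theta_rec.
have margin (m n : nat) : (m < n)%N -> 1 <= n%:R - m%:R :> R.
  by move=> lt_mn; rewrite -natrB ?ler1n ?subn_gt0 // ltnW.
have signed_count := sum_pm_one_card (nbrs E i) (action_pm_one theta q0_pm k).
split=> [favour act1 | favour actN1].
- by apply: persists act1 => //; [left | rewrite mul1r signed_count margin].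
- apply: persists actN1 => //; first by right.
  by rewrite mulN1r signed_count opprB margin.
Qed.
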